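(* Let $w$, $w_1$, $w_2$ be binary words, and let $p_1<p_2<\dots<p_k$ be all lost positions of $w$. Then $1<p_1$ and $p_k<|w|$, and there is a monotonically increasing injective mapping \[\mu:\{p_1,\dots,p_k\}\to\{1,2,\dots,|w|-1\}\] such that for all $i=1,\dots,k$, the position $|w_1|+\mu(p_i)$ is lost in the word $w_1ww_2$ and $\mu(p_i)\le p_i$.
   Context: Words are finite sequences over $\{0,1\}$; $w[i..j]=w[i]\cdots w[j]$; $\bar c$ denotes the letter different from $c$. A period of $w$ is $p\ge1$ with $w[i+p]=w[i]$ for all $1\le i\le|w|-p$. A run of $w$ is an interval $[i..j]$, $1\le i<j\le|w|$, such that with $p$ the least period of $w[i..j]$: $j-i+1\ge 2p$, ($i=1$ or $w[i-1]\ne w[i-1+p]$), and ($j=|w|$ or $w[j+1]\ne w[j+1-p]$). For $c\in\{0,1\}$, $<_c$ is the lexicographic order on words from the letter order $0<_01$, resp. $1<_10$ (proper prefixes are smaller). A nonempty word $x$ is $<$-Lyndon if for every factorization $x=yz$, $y,z$ nonempty, $x\neq zy$ and $x<zy$. For a position $1<i\le|w|$ define: $c_w(i)=\overline{w[i-1]}$; $L_w(i)=\max\{j: w[i..j]$ is $<_{c_w(i)}$-Lyndon$\}$; $D_w(i)=L_w(i)-i+1$; $S_w(i)=\min\{j: D_w(i)$ is a period of $w[j..L_w(i)]\}$; $E_w(i)=\max\{j: D_w(i)$ is a period of $w[i..j]\}$; $R_w(i)=[S_w(i)..E_w(i)]$. For a run $r=[s..e]$ of $w$ with $e=|w|$ and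 $c\in\{0,1\}$ let $r_w(c)=\min\{i: R_w(i)=r$ and $w[i..L_w(i)]$ is $<_c$-Lyndon$\}$, and let $f_w(r)\in\{0,1\}$ be such that $r_w(f_w(r))\ge r_w(\overline{f_w(r)})$, with $f_w(r)=0$ if the period of $w[s..e]$ is one. A position $1<i\le|w|$ is lost in $w$ iff one of: (i) $E_w(i)<|w|$, $S_w(i)>1$ and $R_w(i)$ is not a run; (ii) $E_w(i)<|w|$, $R_w(i)$ is a run, and $i+D_w(i)\le E_w(i)$; (iii) $E_w(i)=|w|$, $R_w(i)$ is a run $r$, $i+D_w(i)\le E_w(i)$, $S_w(i)<i$, and $w[i..L_w(i)]$ is $<_{f_w(r)}$-Lyndon. *)

(* Binary words are seq bool: letter 0 = false, letter 1 = true.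
   Positions are 1-indexed as in the paper. *)
From mathcomp Require Import all_boot.
From mathcomp Require Import zify.
Set Implicit Arguments. Unset Strict Implicit. Unset Printing Implicit Defensive.

Definition word := seq bool.

Definition letter (w : word) (i : nat) : bool := nth false w i.-1.

Definition factor (w : word) (i j : nat) : word := drop i.-1 (take j w).

Definition period (u : word) (p : nat) : bool :=
  (0 < p) && [forall k : 'I_(size u), (k + p < size u) ==> (nth false u (k + p) == nth false u k)].

Lemma period_exists (u : word) : exists p, period u p.
Proof.
exists (size u).+1; apply/andP; split => //.
apply/forallP => k; apply/implyP => H; exfalso; have := ltn_ord k; lia.
Qed.

Definition lper (u : word) : nat := ex_minn (period_exists u).

Definition is_run (w : word) (i j : nat) : Prop :=
  let p := lper (factor w i j) in
  [/\ 1 <= i < j, j <= size w,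
      p.*2 <= j - i + 1,
      (i = 1 \/ letter w i.-1 != letter w (i.-1 + p)) &
      (j = size w \/ letter w j.+1 != letter w (j.+1 - p))].

Fixpoint lexlt (c : bool) (x y : word) : bool :=
  match x, y with
  | [::], _ :: _ => true
  | _, [::] => false
  | a :: x', b :: y' => if a == b then lexlt c x' y' else a == c
  end.

(* x is <_c-Lyndon: nonempty, and for each factorization x = yz (y, z nonempty),
   x <> zy and x <_c zy;  zy = rot |y| x *)
Definition lyndon (c : bool) (x : word) : bool :=
  (x != [::]) &&
  [forall k : 'I_(size x), (0 < k) ==> ((rot k x != x) && lexlt c x (rot k x))].

Definition cw (w : word) (i : nat) : bool := ~~ letter w i.-1.

Definition Lw (w : word) (i : nat) : nat :=
  \max_(i <= j < (size w).+1 | lyndon (cw w i) (factor w i j)) j.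

Definition Dw (w : word) (i : nat) : nat := Lw w i - i + 1.

(* min over j >= 1; j = i always qualifies, so restricting to j <= i is harmless *)
Definition Sw (w : word) (i : nat) : nat :=
  \big[minn/i]_(1 <= j < i.+1 | period (factor w j (Lw w i)) (Dw w i)) j.

Definition Ew (w : word) (i : nat) : nat :=
  \max_(i <= j < (size w).+1 | period (factor w i j) (Dw w i)) j.

Definition Rw (w : word) (i : nat) : nat * nat := (Sw w i, Ew w i).

(* r_w(c) for r = [s..e]; min of the empty set is represented by |w|+1 (= infinity) *)
Definition rw (w : word) (r : nat * nat) (c : bool) : nat :=
  \big[minn/(size w).+1]_(2 <= i < (size w).+1 |
      (Rw w i == r) && lyndon c (factor w i (Lw w i))) i.

Definition fw (w : word) (r : nat * nat) : bool :=
  if lper (factor w r.1 r.2) == 1 then false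
  else rw w r false <= rw w r true.

Definition lost (w : word) (i : nat) : Prop :=
  1 < i <= size w /\
  let S := Sw w i in let E := Ew w i in let D := Dw w i in
  [\/ [/\ E < size w, 1 < S & ~ is_run w S E],
      [/\ E < size w, is_run w S E & i + D <= E] |
      [/\ E = size w, is_run w S E, i + D <= E, S < i &
          lyndon (fw w (S, E)) (factor w i (Lw w i))]].

From mathcomp Require Import all_boot zify.
From Stdlib Require Import Classical_Prop IndefiniteDescription.
Set Implicit Arguments. Unset Strict Implicit. Unset Printing Implicit Defensive.

(* Every position i > 1 of a word is described by its Lyndon root: the longest
   <_c-Lyndon factor w[i..L] (c the letter opposite to w[i-1]) has a length D that
   is the period of the maximal D-periodic interval R(i) = [S..E] containing it,
   and R(i) ends either at the end of w or where the periodicity drops below the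
   root.  These conditions characterise (L, D, S, E), so they can be checked in
   w1 w w2 directly.  If R(i) ends inside w, only its left end can move, and a lost
   position stays lost.  If it reaches the end of w, extending it to the right may
   flip its orientation f; the lost f-root p is then replaced by the nearest
   preceding (~f)-root q of the same run, which exists since f was chosen with
   r(~f) <= r(f) <= p, and lies less than one period before p.  Two f-roots of one
   run are never less than a period apart, a Lyndon word being smaller than its
   rotations, so distinct lost positions get distinct images below them; sorting
   the images yields the increasing map mu. *)

Local Notation nth0 := (nth false).

Lemma neq_negb (a b : bool) : a != b -> b = ~~ a.
Proof. by case: a; case: b. Qed.

Lemma bigmin_lb (r : seq nat) (P : pred nat) d :
  \big[minn/d]_(i <- r | P i) i <= d /\
  forall j, j \in r -> P j -> \big[minn/d]_(i <- r | P i) i <= j.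
Proof.
elim: r => [|x r [IHd IHr]]; rewrite ?big_nil ?big_cons //.
case: ifP => Px; split; rewrite ?geq_min ?IHd ?orbT // => j;
  rewrite inE => /predU1P[->|/IHr Hj] Pj.
- by rewrite geq_minl.
- by rewrite geq_min Hj ?orbT.
- by rewrite Px in Pj.
- exact: Hj.
Qed.

Lemma bigmax_natP a b (P : pred nat) m : a <= m < b -> P m ->
  let M := \max_(a <= i < b | P i) i in
  [/\ a <= M < b, P M & forall j, M < j < b -> ~~ P j].
Proof.
move=> Hm Pm M.
have HmM : m <= M by apply: leq_bigmax_seq; rewrite ?mem_index_iota.
have Hub : forall j, a <= j < b -> P j -> j <= M.
  by move=> j Hj Pj; apply: leq_bigmax_seq; rewrite ?mem_index_iota.
have HM : M = 0 \/ (a <= M < b /\ P M).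
  rewrite /M big_nat_cond.
  apply: (big_ind (fun x => x = 0 \/ (a <= x < b /\ P x))) => [|x y Hx Hy|i /andP[]];
    [by left | | by right].
  by rewrite /maxn; case: ifP.
have [HaM PM] : a <= M < b /\ P M.
  case: HM => // HM0; rewrite HM0 in HmM *.
  by move: HmM; rewrite leqn0 => /eqP Hm0; subst m.
by split => // j Hj; apply/negP => /(Hub j) H; have := H ltac:(lia); lia.
Qed.

Lemma bigmin_natP a b (P : pred nat) d : a <= d < b -> P d ->
  let M := \big[minn/d]_(a <= i < b | P i) i in
  [/\ a <= M <= d, P M & forall j, a <= j < M -> ~~ P j].
Proof.
move=> Hd Pd M; have [HMd Hlb] := bigmin_lb (index_iota a b) P d.
have [HaM PM] : a <= M < b /\ P M.
  rewrite /M big_nat_cond.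
  apply: (big_ind (fun x => a <= x < b /\ P x)) => [//|x y Hx Hy|i /andP[] //].
  by rewrite /minn; case: ifP.
split => //; first by lia.
by move=> j Hj; apply/negP => /(Hlb j); rewrite mem_index_iota => /(_ ltac:(lia)); lia.
Qed.

Lemma size_factor w i j : 0 < i -> j <= size w -> size (factor w i j) = j.+1 - i.
Proof. by move=> Hi Hj; rewrite /factor size_drop size_take; case: ltnP; lia. Qed.

Lemma nth_factor w i j k : 0 < i -> j <= size w -> k < j.+1 - i ->
  nth0 (factor w i j) k = letter w (i + k).
Proof.
move=> Hi Hj Hk; rewrite /factor nth_drop nth_take; last by lia.
by rewrite /letter; congr nth; lia.
Qed.

Lemma letter_cat w1 w w2 k : 0 < k <= size w ->
  letter (w1 ++ w ++ w2) (size w1 + k) = letter w k.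
Proof.
move=> Hk; rewrite /letter nth_cat ifF; last by lia.
by rewrite nth_cat ifT; [congr nth|]; lia.
Qed.

Lemma factor_cat w1 w w2 i j : 0 < i -> j <= size w ->
  factor (w1 ++ w ++ w2) (size w1 + i) (size w1 + j) = factor w i j.
Proof.
move=> Hi Hj; have Hsz : size (w1 ++ w ++ w2) = size w1 + size w + size w2.
  by rewrite !size_cat addnA.
apply: (@eq_from_nth _ false) => [|k]; rewrite !size_factor ?Hsz //; try lia.
by move=> Hk; rewrite !nth_factor ?Hsz -?addnA ?letter_cat //; lia.
Qed.

Lemma cw_cat w1 w w2 i : 1 < i <= size w -> cw (w1 ++ w ++ w2) (size w1 + i) = cw w i.
Proof. by move=> Hi; rewrite /cw (_ : _.-1 = size w1 + i.-1) ?letter_cat //; lia. Qed.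

Definition periodic_on (w : word) (D s e : nat) : Prop :=
  forall k, s <= k -> k + D <= e -> letter w k = letter w (k + D).

Lemma periodP w i j D : 0 < i -> j <= size w ->
  period (factor w i j) D <-> 0 < D /\ periodic_on w D i j.
Proof.
move=> Hi Hj; rewrite /period; split.
- case/andP=> HD /forallP Hper; split => // k Hk1 Hk2.
  have Hk : k - i < size (factor w i j) by rewrite size_factor //; lia.
  have HkD : k - i + D < size (factor w i j) by rewrite size_factor //; lia.
  move/implyP: (Hper (Ordinal Hk)) => /(_ HkD)/eqP /=.
  rewrite !nth_factor; [|lia..].
  by rewrite addnA !subnKC // => ->.
- case=> HD Hper; rewrite HD; apply/forallP => -[k /= Hk]; apply/implyP.
  rewrite size_factor // in Hk * => HkD.
  by rewrite !nth_factor; [rewrite addnA -Hper|..]; lia.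
Qed.

Lemma lper_spec u : period u (lper u) /\ forall p, period u p -> lper u <= p.
Proof. by rewrite /lper; case: ex_minnP. Qed.

Lemma periodic_on_sub w D s e s' e' :
  periodic_on w D s e -> s <= s' -> e' <= e -> periodic_on w D s' e'.
Proof. by move=> Hp Hs He k Hk1 Hk2; apply: Hp; lia. Qed.

Lemma periodic_on_iter w D s e k m : periodic_on w D s e -> s <= k -> k + m * D <= e ->
  letter w (k + m * D) = letter w k.
Proof.
move=> Hp Hk; elim: m => [|m IH] Hm; first by rewrite addn0.
rewrite mulSn in Hm *; rewrite addnCA addnC -Hp; [apply: IH|..]; lia.
Qed.

Lemma periodic_on_glue w D s l i e : periodic_on w D s l -> periodic_on w D i e ->
  s <= i -> i + D = l.+1 -> periodic_on w D s e.
Proof.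
move=> H1 H2 Hsi HD k Hk1 Hk2.
by case: (leqP (k + D) l) => Hkl; [apply: H1 | apply: H2]; lia.
Qed.

Lemma periodic_on_extend_left w D s e : 0 < s -> periodic_on w D s e ->
  exists2 s', 0 < s' <= s & periodic_on w D s' e /\
    (s' = 1 \/ letter w s'.-1 != letter w (s'.-1 + D)).
Proof.
elim: s => [//|s IH] _; case: (posnP s) => [->|Hs] Hp.
  by exists 1 => //; split => //; left.
case: (eqVneq (letter w s) (letter w (s + D))) => Hsd; last first.
  by exists s.+1; rewrite ?leqnn //; split => //; right.
have Hp' : periodic_on w D s e.
  by move=> k Hk1 Hk2; case: (ltngtP k s) => Hks; [lia | apply: Hp | rewrite Hks].
by have [s' Hs' Hp''] := IH Hs Hp'; exists s' => //; lia.
Qed.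

Lemma periodic_on_extend_right w D s e : e <= size w -> periodic_on w D s e ->
  exists2 e', e <= e' <= size w & periodic_on w D s e' /\
    (e' = size w \/ letter w e'.+1 != letter w (e'.+1 - D)).
Proof.
move Hm : (size w - e) => m; elim: m e Hm => [|m IH] e Hm He Hp.
  by exists e; [lia | split => //; left; lia].
case: (eqVneq (letter w e.+1) (letter w (e.+1 - D))) => Hed; last first.
  by exists e; [lia | split => //; right].
have Hp' : periodic_on w D s e.+1.
  move=> k Hk1 Hk2; case: (ltngtP (k + D) e.+1) => HkD; [apply: Hp | lia |]; try lia.
  by rewrite HkD Hed; congr letter; lia.
by have [e' He' Hp''] := IH e.+1 ltac:(lia) ltac:(lia) Hp'; exists e' => //; lia.
Qed.

Lemma periodic_on_left_mismatch w D s e :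
  periodic_on w D s.+1 e -> ~ periodic_on w D s e -> letter w s != letter w (s + D).
Proof.
move=> H1 H2; apply/negP => /eqP Hs; apply: H2 => k Hk1 Hk2.
by case: (ltngtP k s) => Hks; [lia | apply: H1 | rewrite Hks].
Qed.

Lemma periodic_on_right_mismatch w D s e :
  periodic_on w D s e -> ~ periodic_on w D s e.+1 ->
  s + D <= e.+1 /\ letter w (e.+1 - D) != letter w e.+1.
Proof.
move=> H1 H2; case: (leqP (s + D) e.+1) => HsD; last first.
  by case: H2 => k; lia.
split => //; apply/negP => /eqP He; apply: H2 => k Hk1 Hk2.
case: (ltngtP (k + D) e.+1) => HkD; [apply: H1 | lia |]; try lia.
by rewrite HkD -He; congr letter; lia.
Qed.

Lemma first_mismatch_unique (A B : nat -> bool) u t :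
  (forall v, v < u -> A v = B v) -> A u != B u ->
  (forall v, v < t -> A v = B v) -> A t != B t -> u = t.
Proof.
move=> Hu Au Ht At; case: (ltngtP u t) => // Hut.
- by rewrite Ht ?eqxx in Au.
- by rewrite Hu ?eqxx in At.
Qed.

Lemma first_mismatch (x y : word) : size x = size y -> x != y ->
  exists t, [/\ t < size x, forall s, s < t -> nth0 x s = nth0 y s & nth0 x t != nth0 y t].
Proof.
elim: x y => [|a x IH] [|b y] //= [Hs] Hne.
case: (eqVneq a b) => [Hab|]; last by exists 0.
have [|t [Ht Hagree Hmis]] := IH y Hs; first by apply: contra Hne => /eqP <-; rewrite Hab.
by exists t.+1; split => // -[|s] //= /Hagree.
Qed.

Lemma lexlt_mismatch c x y t : t < size x -> t < size y ->
  (forall s, s < t -> nth0 x s = nth0 y s) ->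
  nth0 x t != nth0 y t -> lexlt c x y = (nth0 x t == c).
Proof.
elim: t x y => [|t IH] [|a x] [|b y] //=; first by move=> _ _ _ /negbTE ->.
move=> Hx Hy Hagree Hmis; have /= -> := Hagree 0 isT; rewrite eqxx.
by apply: IH => // s Hs; apply: (Hagree s.+1).
Qed.

Lemma lexlt_asym c x y : lexlt c x y -> ~~ lexlt c y x.
Proof.
elim: x y => [|a x IH] [|b y] //=.
case: (eqVneq a b) => [_|Hab /eqP Hac]; first exact: IH.
by apply/eqP => Hbc; move: Hab; rewrite Hac Hbc eqxx.
Qed.

Lemma nth_rot_low (x : word) k s : s + k < size x -> nth0 (rot k x) s = nth0 x (s + k).
Proof.
move=> Hs; rewrite /rot nth_cat size_drop ifT; last by lia.
by rewrite nth_drop addnC.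
Qed.

Lemma nth_rot_high (x : word) k s : k <= size x -> size x - k <= s < size x ->
  nth0 (rot k x) s = nth0 x (s + k - size x).
Proof.
move=> Hk Hs; rewrite /rot nth_cat size_drop ifF; last by lia.
by rewrite nth_take; [congr nth|]; lia.
Qed.

Lemma lyndon_lt_rot c x k : lyndon c x -> 0 < k < size x -> lexlt c x (rot k x).
Proof.
case/andP=> _ /forallP Hly /andP[Hk0 Hk].
by move: (Hly (Ordinal Hk)); rewrite /= Hk0 => /andP[].
Qed.

Lemma lyndon_rot_mismatch c x k : lyndon c x -> 0 < k < size x ->
  exists t, [/\ t < size x, forall s, s < t -> nth0 x s = nth0 (rot k x) s,
              nth0 x t = c & nth0 (rot k x) t = ~~ c].
Proof.
case/andP=> _ /forallP Hly /andP[Hk0 Hk].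
move: (Hly (Ordinal Hk)); rewrite /= Hk0 /= eq_sym => /andP[Hne Hlt].
have [t [Ht Hagree Hmis]] := first_mismatch (esym (size_rot k x)) Hne.
have Ht' : t < size (rot k x) by rewrite size_rot.
move: Hlt; rewrite (lexlt_mismatch c Ht Ht' Hagree Hmis) => /eqP Hxt.
by exists t; split => //; rewrite -Hxt; apply: neq_negb.
Qed.

(* A shift k and its complementary shift |x| - k would give two mutually
   contradicting first mismatches between x and its rotation. *)
Lemma lyndon_aperiodic c x k : lyndon c x -> 0 < k < size x ->
  ~ (forall s, s + k < size x -> nth0 x s = nth0 x (s + k)).
Proof.
move=> Hly Hk Hper; have Hk' : 0 < size x - k < size x by lia.
have [t0 [Ht0 Hagree0 Hx0 Hr0]] := lyndon_rot_mismatch Hly Hk.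
have [t1 [Ht1 Hagree1 Hx1 Hr1]] := lyndon_rot_mismatch Hly Hk'.
have Ht0k : size x <= t0 + k.
  rewrite leqNgt; apply/negP => H; move: Hr0.
  by rewrite nth_rot_low // -Hper // Hx0; case: (c).
have Ht1k : t1 < k.
  rewrite ltnNge; apply/negP => H; move: Hr1; rewrite nth_rot_high; try lia.
  have -> : t1 + (size x - k) - size x = t1 - k by lia.
  by rewrite Hper ?subnK ?Hx1; [case: (c) | lia ..].
have Hrot0 : nth0 x (t0 + k - size x) = ~~ c.
  by rewrite -Hr0 nth_rot_high; lia.
have Hrot1 : nth0 x (t1 + (size x - k)) = ~~ c by rewrite -Hr1 nth_rot_low; lia.
have Ht : t0 + k - size x = t1.
  apply: (@first_mismatch_unique (nth0 x) (fun v => nth0 x (v + (size x - k)))) => /=.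
  - move=> v Hv; rewrite (Hagree0 (v + (size x - k))); last by lia.
    by rewrite nth_rot_high; [congr nth|..]; lia.
  - by rewrite Hrot0 (_ : _ + _ = t0) ?Hx0; [case: (c)|lia].
  - by move=> v Hv; rewrite Hagree1 ?nth_rot_low //; lia.
  - by rewrite Hx1 Hrot1; case: (c).
by move: Hrot0; rewrite Ht Hx1; case: (c).
Qed.

Lemma lyndon_shift_mismatch c x k : lyndon c x -> 0 < k < size x ->
  exists t, [/\ t + k < size x, forall s, s < t -> nth0 x s = nth0 x (s + k),
              nth0 x t = c & nth0 x (t + k) = ~~ c].
Proof.
move=> Hly Hk; have [t [Ht Hagree Hx Hr]] := lyndon_rot_mismatch Hly Hk.
case: (ltnP (t + k) (size x)) => Htk.
  by exists t; split => // [s Hs|]; rewrite -?nth_rot_low ?Hagree //; lia.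
case: (lyndon_aperiodic Hly Hk) => s Hs.
by rewrite Hagree ?nth_rot_low //; lia.
Qed.

Lemma lyndon_ends c x : lyndon c x -> 1 < size x ->
  nth0 x 0 = c /\ nth0 x (size x).-1 = ~~ c.
Proof.
move=> Hly Hx; have Hk : 0 < (size x).-1 < size x by lia.
have [t [Ht _ Hx0 Hlast]] := lyndon_shift_mismatch Hly Hk.
have Ht0 : t = 0 by lia.
by move: Hx0 Hlast; rewrite Ht0 add0n.
Qed.

Lemma lyndon_orientation c c' x : lyndon c x -> lyndon c' x -> 1 < size x -> c' = c.
Proof.
move=> Hly Hly' Hx; have [Hc _] := lyndon_ends Hly Hx.
by have [] := lyndon_ends Hly' Hx; rewrite Hc.
Qed.

Lemma lyndon_size1 c x : size x = 1 -> lyndon c x.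
Proof.
move=> Hx; apply/andP; split; first by case: x Hx.
by apply/forallP => -[k]; rewrite Hx; case: k.
Qed.

Lemma lyndon_of_shift_mismatch c x : 0 < size x ->
  (forall k, 0 < k < size x -> exists t, [/\ t + k < size x,
     forall s, s < t -> nth0 x s = nth0 x (s + k), nth0 x t = c & nth0 x (t + k) = ~~ c]) ->
  lyndon c x.
Proof.
move=> Hx Hmis; apply/andP; split; first by rewrite -size_eq0 -lt0n.
apply/forallP => k; apply/implyP => Hk0.
have [t [Ht Hagree Hxt Hrt]] := Hmis k ltac:(by rewrite Hk0 ltn_ord).
rewrite -nth_rot_low // in Hrt.
have Hne : nth0 x t != nth0 (rot k x) t by rewrite Hxt Hrt; case: (c).
apply/andP; split; first by apply: contra Hne => /eqP ->.
rewrite (lexlt_mismatch c _ _ _ Hne) ?Hxt ?size_rot //; [lia|lia|].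
by move=> s Hs; rewrite nth_rot_low; [apply: Hagree|]; lia.
Qed.

Section LyndonFactors.
Variables (w : word) (c : bool).

Lemma not_lyndon_factor_periodic j t D : periodic_on w D j t ->
  0 < j -> t <= size w -> 0 < D < t.+1 - j -> ~~ lyndon c (factor w j t).
Proof.
move=> Hp Hj Ht HD; apply/negP => Hly.
apply: (lyndon_aperiodic (k := D) Hly); first by rewrite size_factor //; lia.
move=> s; rewrite size_factor // => Hs.
by rewrite !nth_factor; [rewrite addnA Hp|..]; lia.
Qed.

(* Under <_c the letter c is the smaller one. *)
Lemma not_lyndon_factor_after_drop j D E t : periodic_on w D j E ->
  letter w E.+1 = c -> letter w (E.+1 - D) = ~~ c ->
  0 < j -> 0 < D -> j + D <= E.+1 -> E < t <= size w -> ~~ lyndon c (factor w j t).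
Proof.
move=> Hp Hdrop Hdrop' Hj HD HjD Ht; apply/negP => Hly.
have Hk : 0 < D < size (factor w j t) by rewrite size_factor //; lia.
have [t1 [Ht1 Hagree Hx Hr]] := lyndon_shift_mismatch Hly Hk.
rewrite size_factor in Ht1; try lia.
rewrite !nth_factor in Hx Hr; try lia.
have Hbefore : t1 < E.+1 - D - j -> False.
  by move=> H; move: Hr; rewrite addnA -Hp ?Hx; [case: (c)|lia..].
have Hafter : E.+1 - D - j < t1 -> False.
  move=> H; move: (Hagree _ H); rewrite !nth_factor; try lia.
  rewrite (_ : j + _ = E.+1 - D); last by lia.
  by rewrite (_ : j + _ = E.+1) ?Hdrop ?Hdrop'; [case: (c)|lia].
have Ht1E : t1 = E.+1 - D - j.
  by case: (ltngtP t1 (E.+1 - D - j)) => [/Hbefore|/Hafter|].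
by move: Hx; rewrite Ht1E (_ : j + _ = E.+1 - D) ?Hdrop'; [case: (c)|lia].
Qed.

Section Rise.
Variables (j D E : nat).
Hypotheses (Hj : 0 < j) (HD : 0 < D) (HjD : j + D <= E.+1) (HE : E < size w).
Hypotheses (Hroot : lyndon c (factor w j (j + D - 1))) (Hp : periodic_on w D j E).
Hypotheses (Hrise : letter w E.+1 = ~~ c) (Hrise' : letter w (E.+1 - D) = c).

Lemma rise_shift_mismatch k : 0 < k <= E.+1 - j -> exists t, [/\ j + t + k <= E.+1,
  forall s, s < t -> letter w (j + s) = letter w (j + s + k),
  letter w (j + t) = c & letter w (j + t + k) = ~~ c].
Proof.
(* The first mismatch for the shift k is the root's first mismatch for the shift
   k %% D, unless that one lies past E+1, in which case it is the rise itself. *)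
move=> Hk.
have Hroot_size : size (factor w j (j + D - 1)) = D by rewrite size_factor; lia.
set r := k %% D; have Hkr : k = k %/ D * D + r := divn_eq k D.
have Hr : r < D by rewrite ltn_mod.
have Hred : forall i, j <= i -> i + k <= E -> letter w (i + k) = letter w (i + r).
  move=> i Hi HiE; rewrite {1}Hkr addnCA addnC (periodic_on_iter Hp); lia.
have [t0 Hagree0 Ht0] : exists2 t0,
    forall s, s < t0 -> letter w (j + s) = letter w (j + s + r) &
    (r = 0 /\ E < t0) \/ [/\ 0 < r, t0 + r < D, letter w (j + t0) = c &
                            letter w (j + t0 + r) = ~~ c].
  case: (posnP r) => Hr0.
    by exists E.+1; [move=> s _; rewrite Hr0 addn0 | left].
  have Hr' : 0 < r < size (factor w j (j + D - 1)) by rewrite Hroot_size; lia.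
  have [t0 [Ht0 Hagree Hx Hy]] := lyndon_shift_mismatch Hroot Hr'.
  rewrite Hroot_size in Ht0; rewrite !nth_factor in Hx Hy; try lia.
  exists t0; last by right; rewrite -addnA.
  by move=> s Hs; move: (Hagree s Hs); rewrite !nth_factor ?addnA; lia.
case: (leqP (j + t0 + k) E.+1) => Hend.
  case: Ht0 => [|[_ _ Hx Hy]]; first by lia.
  exists t0; split => //; first by move=> s Hs; rewrite Hred; [apply: Hagree0|..]; lia.
  case: (ltngtP (j + t0 + k) E.+1) => Hlast; last by rewrite Hlast.
  - by rewrite Hred //; lia.
  - by lia.
exists (E.+1 - j - k); split; first by lia.
- by move=> s Hs; rewrite Hred; [apply: Hagree0|..]; lia.
- have Hq : 0 < k %/ D.
    case: (posnP (k %/ D)) => // Hq0; rewrite Hq0 mul0n add0n in Hkr.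
    by case: Ht0 => [[]|[]]; lia.
  rewrite Hagree0; last by lia.
  have HqD : k %/ D * D = (k %/ D).-1 * D + D by rewrite addnC -mulSn prednK.
  rewrite -Hrise' (_ : E.+1 - D = j + (E.+1 - j - k) + r + (k %/ D).-1 * D); last by lia.
  by rewrite (periodic_on_iter Hp); lia.
- by rewrite (_ : j + _ + k = E.+1) //; lia.
Qed.

Lemma lyndon_factor_after_rise : lyndon c (factor w j E.+1).
Proof.
apply: lyndon_of_shift_mismatch => [|k]; rewrite size_factor //; try lia.
move=> Hk; have [t [Ht Hagree Hx Hy]] := rise_shift_mismatch (k := k) ltac:(lia).
exists t; split; try lia.
- by move=> s Hs; rewrite !nth_factor ?addnA; [apply: Hagree|..]; lia.
- by rewrite nth_factor //; lia.
- by rewrite nth_factor ?addnA //; lia.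
Qed.

End Rise.
End LyndonFactors.

Section Position.
Variables (w : word) (i : nat).
Hypothesis Hi : 0 < i <= size w.

Lemma Lw_max : [/\ i <= Lw w i <= size w, lyndon (cw w i) (factor w i (Lw w i)) &
  forall j, Lw w i < j <= size w -> ~~ lyndon (cw w i) (factor w i j)].
Proof.
have Hii : lyndon (cw w i) (factor w i i) by apply: lyndon_size1; rewrite size_factor; lia.
have /= := bigmax_natP (P := fun j => lyndon (cw w i) (factor w i j))
  (a := i) (b := (size w).+1) (m := i) ltac:(lia) Hii.
rewrite -/(Lw w i) => -[HL HLly HLmax].
by split => [||j Hj]; [lia | | apply: HLmax; lia].
Qed.

Lemma Dw_gt0 : 0 < Dw w i.
Proof. by rewrite /Dw addn1. Qed.

Lemma Ew_max : [/\ i <= Ew w i <= size w, periodic_on w (Dw w i) i (Ew w i) &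
  forall j, Ew w i < j <= size w -> ~ periodic_on w (Dw w i) i j].
Proof.
have Hper j : i <= j <= size w ->
    period (factor w i j) (Dw w i) <-> periodic_on w (Dw w i) i j.
  by move=> Hj; rewrite periodP; [have := Dw_gt0; tauto | lia | lia].
have HD := Dw_gt0.
have Hii : period (factor w i i) (Dw w i) by apply/(Hper i ltac:(lia)) => k; lia.
have /= := bigmax_natP (P := fun j => period (factor w i j) (Dw w i))
  (a := i) (b := (size w).+1) (m := i) ltac:(lia) Hii.
rewrite -/(Ew w i) => -[HE HEper HEmax].
split => [||j Hj /(Hper j ltac:(lia))]; first by lia.
- by apply/(Hper (Ew w i) ltac:(lia)).
- by move/negP: (HEmax j ltac:(lia)).
Qed.

Lemma Sw_min : [/\ 0 < Sw w i <= i, periodic_on w (Dw w i) (Sw w i) (Lw w i) &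
  forall j, 0 < j < Sw w i -> ~ periodic_on w (Dw w i) j (Lw w i)].
Proof.
have [HL _ _] := Lw_max.
have Hper j : 0 < j -> period (factor w j (Lw w i)) (Dw w i) <->
    periodic_on w (Dw w i) j (Lw w i).
  by move=> Hj; rewrite periodP; [have := Dw_gt0; tauto | lia | lia].
have Hii : period (factor w i (Lw w i)) (Dw w i).
  by apply/(Hper i ltac:(lia)) => k; rewrite /Dw; lia.
have /= := bigmin_natP (P := fun j => period (factor w j (Lw w i)) (Dw w i))
  (a := 1) (b := i.+1) (d := i) ltac:(lia) Hii.
rewrite -/(Sw w i) => -[HS HSper HSmin].
split => [||j Hj /(Hper j ltac:(lia))]; first by lia.
- by apply/(Hper (Sw w i) ltac:(lia)).
- by move/negP: (HSmin j Hj).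
Qed.

End Position.

(* For a position j, [lyndon_root u j D S E c] holds exactly when
   Lw u j = j + D - 1, Sw u j = S, Ew u j = E and cw u j = c. *)
Record lyndon_root (u : word) (j D S E : nat) (c : bool) : Prop := LyndonRoot {
  root_start : 0 < S <= j;
  root_fits : j + D <= E.+1;
  root_end : E <= size u;
  root_gt0 : 0 < D;
  root_periodic : periodic_on u D S E;
  root_left : S = 1 \/ letter u S.-1 != letter u (S.-1 + D);
  root_right : E = size u \/ letter u E.+1 = c /\ letter u (E.+1 - D) = ~~ c;
  root_lyndon : lyndon c (factor u j (j + D - 1));
  root_cw : cw u j = c }.

Lemma lyndon_root_pos w i : 0 < i <= size w ->
  lyndon_root w i (Dw w i) (Sw w i) (Ew w i) (cw w i).
Proof.
move=> Hi; have [HL HLly HLmax] := Lw_max Hi.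
have [HE HEper HEmax] := Ew_max Hi.
have [HS HSper HSmin] := Sw_min Hi.
have HD := Dw_gt0 w i.
have HLD : Lw w i = i + Dw w i - 1 by rewrite /Dw; lia.
have HLE : Lw w i <= Ew w i.
  rewrite leqNgt; apply/negP => HEL; apply: (HEmax (Lw w i)); first by lia.
  by move=> k; rewrite /Dw; lia.
split; rewrite -?HLD //; try lia.
- by apply: (periodic_on_glue HSper HEper); rewrite /Dw; lia.
- case: (ltnP 1 (Sw w i)) => HS1; [right | by left; lia].
  have HSpred : (Sw w i).-1.+1 = Sw w i by lia.
  apply: (@periodic_on_left_mismatch _ _ _ (Lw w i)); first by rewrite HSpred.
  by apply: HSmin; lia.
- case: (ltnP (Ew w i) (size w)) => HEn; [right | by left; lia].
  have [HiE Hmis] := periodic_on_right_mismatch HEper (HEmax (Ew w i).+1 ltac:(lia)).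
  have Hnot_rise : ~ (letter w (Ew w i).+1 = ~~ cw w i /\
                      letter w ((Ew w i).+1 - Dw w i) = cw w i).
    case=> Hrise Hrise'; move/negP: (HLmax (Ew w i).+1 ltac:(lia)); apply.
    by apply: (lyndon_factor_after_rise (D := Dw w i)); rewrite -?HLD //; lia.
  move: Hmis Hnot_rise; case: (letter w (Ew w i).+1); case: (cw w i);
    case: (letter w ((Ew w i).+1 - Dw w i)) => //=; tauto.
Qed.

Section RootDetermines.
Variables (u : word) (j D S E : nat) (c : bool).
Hypothesis R : lyndon_root u j D S E c.

Let Hj : 0 < j <= size u.
Proof. by case: R; lia. Qed.

Lemma lyndon_root_Lw : Lw u j = j + D - 1.
Proof.
have [HL HLly HLmax] := Lw_max Hj; rewrite (root_cw R) in HLly HLmax.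
case: R => HS HE HEn HD Hp Hleft Hright Hly _.
case: (ltngtP (Lw u j) (j + D - 1)) => // HLD.
  by move/negP: (HLmax (j + D - 1) ltac:(lia)).
case: (leqP (Lw u j) E) => HLE.
  have HpL : periodic_on u D j (Lw u j) by apply: periodic_on_sub Hp _ HLE; lia.
  suff : ~~ lyndon c (factor u j (Lw u j)) by rewrite HLly.
  by apply: not_lyndon_factor_periodic HpL _ _ _; lia.
have HpE : periodic_on u D j E by apply: periodic_on_sub Hp _ (leqnn E); lia.
case: Hright => [|[Hdrop Hdrop']]; first by lia.
suff : ~~ lyndon c (factor u j (Lw u j)) by rewrite HLly.
by apply: not_lyndon_factor_after_drop HpE Hdrop Hdrop' _ _ _ _; lia.
Qed.

Lemma lyndon_root_Dw : Dw u j = D.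
Proof. by rewrite /Dw lyndon_root_Lw; case: R; lia. Qed.

Lemma lyndon_root_Ew : Ew u j = E.
Proof.
have [HEj HEper HEmax] := Ew_max Hj; rewrite lyndon_root_Dw in HEper HEmax.
case: R => HS HE HEn HD Hp _ Hright _ _.
case: (ltngtP (Ew u j) E) => // HEE.
  by case: (HEmax E ltac:(lia)); apply: periodic_on_sub Hp _ (leqnn E); lia.
case: Hright => [|[Hdrop Hdrop']]; first by lia.
move: (HEper (E.+1 - D) ltac:(lia) ltac:(lia)).
by rewrite subnK ?Hdrop ?Hdrop'; [case: (c) | lia].
Qed.

Lemma lyndon_root_Sw : Sw u j = S.
Proof.
have [HSj HSper HSmin] := Sw_min Hj.
rewrite lyndon_root_Dw lyndon_root_Lw in HSper HSmin.
case: R => HS HE HEn HD Hp Hleft _ _ _.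
case: (ltngtP (Sw u j) S) => // HSS.
  case: Hleft => [|Hmis]; first by lia.
  by move: Hmis; rewrite HSper ?eqxx //; lia.
by case: (HSmin S ltac:(lia)); apply: periodic_on_sub Hp (leqnn S) _; lia.
Qed.

End RootDetermines.

Lemma factor_rot w D s e p k : periodic_on w D s e -> 0 < s <= p -> p + k + D <= e.+1 ->
  e <= size w -> k <= D ->
  factor w (p + k) (p + k + D - 1) = rot k (factor w p (p + D - 1)).
Proof.
move=> Hper Hsp Hpe He Hk.
apply: (@eq_from_nth _ false) => [|t]; rewrite ?size_rot !size_factor; try lia.
move=> Ht; rewrite nth_factor; try lia.
case: (ltnP (t + k) D) => Htk.
  by rewrite nth_rot_low ?size_factor ?nth_factor; [congr letter|..]; lia.
rewrite nth_rot_high ?size_factor ?nth_factor; try lia.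
by rewrite [RHS]Hper; [congr letter|..]; lia.
Qed.

Lemma factor_shift w D s e p m : periodic_on w D s e -> 0 < s <= p ->
  p + m * D + D <= e.+1 -> e <= size w ->
  factor w (p + m * D) (p + m * D + D - 1) = factor w p (p + D - 1).
Proof.
move=> Hper Hsp; elim: m => [|m IH] Hpe He; first by rewrite addn0.
have Hsize : size (factor w p (p + D - 1)) = D by rewrite size_factor; lia.
have -> : p + m.+1 * D = p + m * D + D by rewrite mulSn; lia.
rewrite (factor_rot (k := D) Hper) ?IH; try lia.
by rewrite -[X in rot X _]Hsize rot_size.
Qed.

Lemma lyndon_conjugate_roots w c D s e p1 p2 : periodic_on w D s e -> 0 < s <= p1 ->
  p1 < p2 < p1 + D -> p2 + D <= e.+1 -> e <= size w ->
  lyndon c (factor w p1 (p1 + D - 1)) -> ~ lyndon c (factor w p2 (p2 + D - 1)).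
Proof.
move=> Hper Hs Hp He Hw Hly1 Hly2; set x := factor w p1 (p1 + D - 1).
have Hx : size x = D by rewrite size_factor; lia.
have Hrot : factor w p2 (p2 + D - 1) = rot (p2 - p1) x.
  by rewrite -(factor_rot Hper Hs) ?subnKC //; lia.
have Hback : rot (D - (p2 - p1)) (rot (p2 - p1) x) = x.
  by have := rotK (p2 - p1) x; rewrite /rotr size_rot Hx.
rewrite Hrot in Hly2.
have /lexlt_asym/negP := lyndon_lt_rot Hly1 (k := p2 - p1) ltac:(rewrite Hx; lia); apply.
by rewrite -/x -{2}Hback; apply: lyndon_lt_rot; rewrite ?size_rot; lia.
Qed.

Section RootRun.
Variables (u : word) (j D S E : nat) (c : bool).
Hypothesis R : lyndon_root u j D S E c.

Lemma lyndon_root_lper : lper (factor u S E) = D.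
Proof.
case: R => HS HE HEn HD Hp _ _ Hly _; have [Hlper Hmin] := lper_spec (factor u S E).
have HS0 : 0 < S by lia.
have /Hmin HlD := (periodP _ HS0 HEn).2 (conj HD Hp).
have [Hl0 Hlp] := (periodP _ HS0 HEn).1 Hlper.
case: (ltngtP (lper (factor u S E)) D) => // Hlt; last by lia.
have Hlp' : periodic_on u (lper (factor u S E)) j (j + D - 1).
  by apply: periodic_on_sub Hlp _ _; lia.
suff : ~~ lyndon c (factor u j (j + D - 1)) by rewrite Hly.
by apply: not_lyndon_factor_periodic Hlp' _ _ _; lia.
Qed.

Lemma is_run_root : is_run u S E <-> D.*2 <= E - S + 1.
Proof.
rewrite /is_run lyndon_root_lper; split => [[] //|HDE].
case: R => HS HE HEn HD _ Hleft Hright _ _; split => //; first by lia.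
by case: Hright => [|[-> ->]]; [left | right; case: (c)].
Qed.

Lemma lyndon_root_shift m : S < j -> j + m * D + D <= E.+1 ->
  lyndon_root u (j + m * D) D S E c.
Proof.
case: R => HS HE HEn HD Hp Hleft Hright Hly Hc HSj HjE.
split => //; try lia; first by rewrite (factor_shift Hp).
by rewrite -Hc /cw (_ : _.-1 = j.-1 + m * D) ?(periodic_on_iter Hp); lia.
Qed.

Lemma lyndon_root_start_lt : 1 < j -> 1 < D -> S < j.
Proof.
case: R => HS HE HEn HD Hp Hleft _ Hly Hc Hj HD1.
case: (ltngtP S j) => // HSj; first by lia.
have Hsz : size (factor u j (j + D - 1)) = D by rewrite size_factor; lia.
have [_] := lyndon_ends Hly ltac:(rewrite Hsz; lia).
rewrite Hsz nth_factor; try lia.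
case: Hleft => [|]; first by lia.
rewrite HSj (_ : j.-1 + D = j + D.-1) -?Hc /cw; last by lia.
by move=> Hmis Hlast; move: Hmis; rewrite Hlast; case: (letter u j.-1).
Qed.

End RootRun.

Section FirstRoots.
Variables (w : word) (r : nat * nat).

Lemma rw_le b j : 1 < j <= size w -> Rw w j = r -> lyndon b (factor w j (Lw w j)) ->
  rw w r b <= j.
Proof.
move=> Hj HR Hly; have [_ Hlb] := bigmin_lb (index_iota 2 (size w).+1)
  (fun i => (Rw w i == r) && lyndon b (factor w i (Lw w i))) (size w).+1.
by apply: Hlb; rewrite ?mem_index_iota ?HR ?eqxx ?Hly //; lia.
Qed.

Lemma rw_attained b : rw w r b <= size w ->
  [/\ 1 < rw w r b, Rw w (rw w r b) = r & lyndon b (factor w (rw w r b) (Lw w (rw w r b)))].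
Proof.
pose K x := x = (size w).+1 \/ [/\ 1 < x, Rw w x = r & lyndon b (factor w x (Lw w x))].
suff : K (rw w r b) by case=> [->|//]; rewrite ltnn.
rewrite /rw big_nat_cond; apply: (big_ind K) => [|x y Kx Ky|i]; first by left.
  by rewrite /minn; case: ifP.
by case/andP=> /andP[Hi _] /andP[/eqP HR Hly]; right.
Qed.

Lemma fw_le : lper (factor w r.1 r.2) != 1 -> rw w r (~~ fw w r) <= rw w r (fw w r).
Proof.
move=> Hl; rewrite /fw (negbTE Hl).
by case: (leqP (rw w r false) (rw w r true)) => /= [|/ltnW].
Qed.

End FirstRoots.

(* [fw] is chosen so that the first (~~ f)-root of the run comes no later than its
   first f-root, hence no later than [p]. *)
Lemma first_opposite_root w p D S c : lyndon_root w p D S (size w) c -> 1 < p -> 1 < D ->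
  lyndon (fw w (S, size w)) (factor w p (p + D - 1)) ->
  exists M, 1 < M <= p /\ lyndon_root w M D S (size w) (~~ fw w (S, size w)).
Proof.
move=> R Hp HD Hlyp; set f := fw w (S, size w) in Hlyp *.
have [HSp HpE Hw _ _ _ _ _ _] := R.
have HRp : Rw w p = (S, size w) by rewrite /Rw (lyndon_root_Sw R) (lyndon_root_Ew R).
have Hfp : rw w (S, size w) f <= p by apply: rw_le; rewrite ?(lyndon_root_Lw R) //; lia.
have Hff : rw w (S, size w) (~~ f) <= rw w (S, size w) f.
  by apply: fw_le; rewrite /= (lyndon_root_lper R); lia.
set M := rw w (S, size w) (~~ f) in Hff.
have HMw : M <= size w by lia.
have [HM [HSM HEM] HlyM] := rw_attained HMw; rewrite -/M in HM HSM HEM HlyM.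
have RM := lyndon_root_pos (w := w) (i := M) ltac:(lia).
rewrite HSM HEM in RM; rewrite (lyndon_root_Lw RM) in HlyM.
have HDM : Dw w M = D by rewrite -(lyndon_root_lper RM) (lyndon_root_lper R).
rewrite HDM in RM HlyM.
have HcM : cw w M = ~~ f.
  apply: lyndon_orientation HlyM (root_lyndon RM) _.
  by rewrite size_factor; case: RM; lia.
by exists M; rewrite -HcM; split => //; lia.
Qed.

Lemma opposite_lyndon_root w p D S c : lyndon_root w p D S (size w) c -> 1 < p -> 1 < D ->
  lyndon (fw w (S, size w)) (factor w p (p + D - 1)) ->
  exists q, [/\ 1 < q < p, p < q + D & lyndon_root w q D S (size w) (~~ fw w (S, size w))].
Proof.
move=> R Hp HD Hlyp; set f := fw w (S, size w) in Hlyp *.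
have [M [HM RM]] := first_opposite_root R Hp HD Hlyp.
have HSM := lyndon_root_start_lt RM ltac:(lia) HD.
have Hpq : p - M = (p - M) %/ D * D + (p - M) %% D := divn_eq (p - M) D.
have HpMD : (p - M) %% D < D by rewrite ltn_mod; lia.
have HpE := root_fits R.
have Rq : lyndon_root w (M + (p - M) %/ D * D) D S (size w) (~~ f).
  by apply: (lyndon_root_shift RM); lia.
have Hqp : M + (p - M) %/ D * D != p.
  apply/eqP => Hq; rewrite -Hq in Hlyp.
  have Hsz : 1 < size (factor w p (p + D - 1)) by rewrite size_factor; lia.
  by have := lyndon_orientation (root_lyndon Rq) Hlyp; rewrite Hq => /(_ Hsz); case: (f).
exists (M + (p - M) %/ D * D); split => //.
  by move: ((p - M) %/ D * D) Hqp Hpq => X *; lia.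
by move: ((p - M) %/ D * D) ((p - M) %% D) Hpq HpMD => X Y *; lia.
Qed.

Section LostRoots.
Variables (u : word) (j D S E : nat) (c : bool).
Hypotheses (R : lyndon_root u j D S E c) (Hj : 1 < j).

Lemma lost_root_nonrun : E < size u -> 1 < S -> E - S + 1 < D.*2 -> lost u j.
Proof.
move=> HE HS Hnrun; split; first by case: R; lia.
rewrite /= (lyndon_root_Sw R) (lyndon_root_Ew R).
by constructor 1; split => // /(is_run_root R); lia.
Qed.

Lemma lost_root_inner : E < size u -> D.*2 <= E - S + 1 -> j + D <= E -> lost u j.
Proof.
move=> HE Hrun HjD; split; first by case: R; lia.
rewrite /= (lyndon_root_Sw R) (lyndon_root_Ew R) (lyndon_root_Dw R).
by constructor 2; split => //; apply/(is_run_root R).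
Qed.

Lemma lost_root_border : E = size u -> D.*2 <= E - S + 1 -> j + D <= E -> S < j ->
  c = fw u (S, E) \/ D = 1 -> lost u j.
Proof.
move=> HE Hrun HjD HSj Hc; split; first by case: R; lia.
rewrite /= (lyndon_root_Sw R) (lyndon_root_Ew R) (lyndon_root_Dw R) (lyndon_root_Lw R).
constructor 3; split => //; first by apply/(is_run_root R).
case: Hc => [<-|HD1]; first exact: root_lyndon R.
by apply: lyndon_size1; rewrite size_factor; case: R; lia.
Qed.

End LostRoots.

Lemma lost_lyndon_root w p : lost w p ->
  lyndon_root w p (Dw w p) (Sw w p) (Ew w p) (cw w p).
Proof. by case=> Hp _; apply: lyndon_root_pos; lia. Qed.

Lemma lost_range w p : lost w p -> 1 < p < size w.
Proof.
move=> Hl; have [HSp HpE HEw HD _ _ _ _ _] := lost_lyndon_root Hl.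
by case: Hl => Hp /= [[]|[]|[]]; lia.
Qed.

(* When the run of a lost position p reaches the end of w, embedding w may flip the
   orientation of the run; the position of w1 ++ w ++ w2 that is lost then comes from
   the partner q of p, a root of the opposite orientation within one period before p. *)
Definition lost_partner (w : word) (p q : nat) : Prop :=
  [/\ q < p < q + Dw w p, Rw w q = Rw w p, Dw w q = Dw w p, ~ lost w q &
      lyndon (fw w (Rw w p)) (factor w p (Lw w p))].

Lemma lost_partner_lt w p1 p2 q : lost w p1 -> lost w p2 ->
  lost_partner w p1 q -> lost_partner w p2 q -> ~ p1 < p2.
Proof.
move=> L1 L2 [Hq1 HR1 HD1 _ Hly1] [Hq2 HR2 HD2 _ Hly2] Hp12.
have R1 := lost_lyndon_root L1; have R2 := lost_lyndon_root L2.
have HR : Rw w p1 = Rw w p2 by rewrite -HR1 HR2.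
have [HS HE] : Sw w p1 = Sw w p2 /\ Ew w p1 = Ew w p2 by case: HR.
have HD : Dw w p1 = Dw w p2 by rewrite -HD1 HD2.
rewrite -HR (lyndon_root_Lw R2) in Hly2; rewrite (lyndon_root_Lw R1) in Hly1.
rewrite HD HS HE in R1 Hly1.
have [HS1 _ HE1 _ Hper1 _ _ _ _] := R1; have [_ HE2 _ _ _ _ _ _ _] := R2.
by apply: (lyndon_conjugate_roots Hper1 HS1 _ HE2 HE1 Hly1 Hly2); lia.
Qed.

Lemma lost_partner_inj w p1 p2 q : lost w p1 -> lost w p2 ->
  q = p1 \/ lost_partner w p1 q -> q = p2 \/ lost_partner w p2 q -> p1 = p2.
Proof.
move=> L1 L2 [->|P1] [E2|P2] //.
- by case: P2 => _ _ _ [].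
- by case: P1 => _ _ _ []; rewrite E2.
- case: (ltngtP p1 p2) => // Hp; first by case: (lost_partner_lt L1 L2 P1 P2).
  by case: (lost_partner_lt L2 L1 P2 P1).
Qed.

Lemma lost_border_data w p : lost w p -> Ew w p = size w ->
  [/\ (Dw w p).*2 <= size w - Sw w p + 1, p + Dw w p <= size w, Sw w p < p &
      lyndon (fw w (Sw w p, size w)) (factor w p (p + Dw w p - 1))].
Proof.
move=> Hl HE; have R := lost_lyndon_root Hl; rewrite HE in R.
case: Hl => _ /=; rewrite HE (lyndon_root_Lw R).
by case=> [[]|[]|[_ /(is_run_root R) Hrun HpD HSp Hly]]; [lia | lia | split].
Qed.

Section Concat.
Variables (w1 w w2 : word).
Local Notation w' := (w1 ++ w ++ w2).
Local Notation a := (size w1).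

Lemma size_cat3 : size w' = a + size w + size w2.
Proof. by rewrite !size_cat addnA. Qed.

Lemma periodic_on_cat D s e : periodic_on w D s e -> 0 < s -> e <= size w ->
  periodic_on w' D (a + s) (a + e).
Proof.
move=> Hp Hs He k Hk1 Hk2; rewrite -(subnKC (_ : a <= k)) -?addnA ?letter_cat; try lia.
by apply: Hp; lia.
Qed.

Lemma lyndon_root_cat j D S E c S2 E2 : lyndon_root w j D S E c -> 1 < j ->
  0 < S2 <= a + S -> a + E <= E2 <= size w' -> periodic_on w' D S2 E2 ->
  S2 = 1 \/ letter w' S2.-1 != letter w' (S2.-1 + D) ->
  E2 = size w' \/ letter w' E2.+1 = c /\ letter w' (E2.+1 - D) = ~~ c ->
  lyndon_root w' (a + j) D S2 E2 c.
Proof.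
case=> HS HE HEn HD _ _ _ Hly Hc Hj HS2 HE2 Hp Hleft Hright.
split => //; try lia.
- by rewrite (_ : a + j + D - 1 = a + (j + D - 1)) ?factor_cat; lia.
- by rewrite cw_cat //; lia.
Qed.

Lemma lyndon_root_cat_inner p D S E c : lyndon_root w p D S E c -> E < size w -> 1 < p ->
  exists S2, [/\ lyndon_root w' (a + p) D S2 (a + E) c, S2 <= a + S &
                 (1 < S -> S2 = a + S)].
Proof.
move=> R HE Hp; have [HS HpE HEn HD Hper Hleft Hright _ _] := R.
have Hper' := periodic_on_cat Hper ltac:(lia) HEn.
have Hright' : letter w' (a + E).+1 = c /\ letter w' ((a + E).+1 - D) = ~~ c.
  case: Hright => [|[H1 H2]]; first by lia.
  rewrite -addnS (_ : a + E.+1 - D = a + (E.+1 - D)); last by lia.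
  by rewrite !letter_cat; [split | lia..].
have [S2 [[HS2 Hper2 Hleft2] HS2eq]] : exists S2, [/\ 0 < S2 <= a + S,
    periodic_on w' D S2 (a + E) & S2 = 1 \/ letter w' S2.-1 != letter w' (S2.-1 + D)] /\
    (1 < S -> S2 = a + S).
  case: (ltnP 1 S) => HS1.
    exists (a + S); split => //; split => //; try lia; right.
    case: Hleft => [|Hmis]; first by lia.
    rewrite (_ : (a + S).-1 = a + S.-1); last by lia.
    by rewrite -addnA !letter_cat; [exact: Hmis | lia..].
  have [S2 HS2 [Hper2 Hleft2]] := periodic_on_extend_left (s := a + S) ltac:(lia) Hper'.
  by exists S2; split; [split | lia].
exists S2; split => //; last by lia.
apply: (lyndon_root_cat R Hp _ _ Hper2 Hleft2 (or_intror Hright')); first by lia.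
by rewrite size_cat3; lia.
Qed.

Lemma lost_cat_inner p : lost w p -> Ew w p < size w -> lost w' (a + p).
Proof.
move=> Hl HE; have /andP[Hp _] := lost_range Hl.
have R := lost_lyndon_root Hl.
have [S2 [R2 HS2 HS2eq]] := lyndon_root_cat_inner R HE Hp.
case: Hl => _ /=; case=> [[_ HS1 Hnrun]|[_ /(is_run_root R) Hrun HpD]|[]]; last by lia.
- apply: (lost_root_nonrun R2); rewrite ?size_cat3 ?(HS2eq HS1); try lia.
  by move: Hnrun; rewrite (is_run_root R); lia.
- by apply: (lost_root_inner R2); rewrite ?size_cat3; lia.
Qed.

Lemma run_cat_extend j D S c : lyndon_root w j D S (size w) c ->
  exists S2 E2, [/\ 0 < S2 <= a + S, a + size w <= E2 <= size w', periodic_on w' D S2 E2,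
    S2 = 1 \/ letter w' S2.-1 != letter w' (S2.-1 + D) &
    E2 = size w' \/ letter w' E2.+1 != letter w' (E2.+1 - D)].
Proof.
case=> HS _ _ _ Hper _ _ _ _.
have Hper' := periodic_on_cat Hper ltac:(lia) (leqnn _).
have [S2 HS2 [Hper2 Hleft2]] := periodic_on_extend_left (s := a + S) ltac:(lia) Hper'.
have Hw : a + size w <= size w' by rewrite size_cat3; lia.
have [E2 HE2 [Hper3 Hright3]] := periodic_on_extend_right Hw Hper2.
by exists S2, E2; split.
Qed.

Lemma lost_cat_border_unary p S c : lyndon_root w p 1 S (size w) c -> 1 < p ->
  1 < size w - S + 1 -> p < size w -> S < p -> lost w' (a + p).
Proof.
move=> R Hp Hrun HpD HSp.
have [S2 [E2 [HS2 HE2 Hper2 Hleft2 Hright2]]] := run_cat_extend R.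
have Hw := size_cat3.
have Hright : E2 = size w' \/ letter w' E2.+1 = c /\ letter w' (E2.+1 - 1) = ~~ c.
  case: Hright2 => [|Hmis]; [by left | right].
  have Hprev : letter w' E2 = ~~ c.
    rewrite -(root_cw R) /cw negbK -(@letter_cat w1 w w2 p.-1); last by lia.
    rewrite (_ : E2 = a + p.-1 + (E2 - (a + p.-1)) * 1) ?(periodic_on_iter Hper2); lia.
  rewrite subn1 /= Hprev; split => //.
  by move: Hmis; rewrite subn1 /= Hprev; case: (letter w' E2.+1); case: (c).
have R2 := lyndon_root_cat R Hp HS2 HE2 Hper2 Hleft2 Hright.
case: (ltnP E2 (size w')) => HE2w.
  by apply: (lost_root_inner R2); lia.
by apply: (lost_root_border R2); try lia; right.
Qed.

Lemma lost_cat_border_root p D S c : lyndon_root w p D S (size w) c -> 1 < p -> 1 < D ->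
  D.*2 <= size w - S + 1 -> p + D <= size w ->
  lyndon (fw w (S, size w)) (factor w p (p + D - 1)) ->
  lost w' (a + p) \/ exists q, [/\ 1 < q < p, p < q + D,
    lyndon_root w q D S (size w) (~~ fw w (S, size w)) & lost w' (a + q)].
Proof.
move=> R Hp HD Hrun HpD Hlyf; set f := fw w (S, size w) in Hlyf *.
have [q [Hq Hpq Rq]] := opposite_lyndon_root R Hp HD Hlyf.
have HSq := lyndon_root_start_lt Rq ltac:(lia) HD.
have Hsize : 1 < size (factor w p (p + D - 1)) by rewrite size_factor; lia.
have Hc : c = f by apply: lyndon_orientation Hlyf (root_lyndon R) Hsize.
rewrite Hc in R.
have [S2 [E2 [HS2 HE2 Hper2 Hleft2 Hright2]]] := run_cat_extend R.
have Hw := size_cat3.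
have lift j g : lyndon_root w j D S (size w) g -> 1 < j ->
    E2 = size w' \/ letter w' E2.+1 = g /\ letter w' (E2.+1 - D) = ~~ g ->
    lyndon_root w' (a + j) D S2 E2 g.
  by move=> Rj Hj; apply: lyndon_root_cat Rj Hj HS2 HE2 Hper2 Hleft2.
have Hrun2 : D.*2 <= E2 - S2 + 1 by lia.
have [Hap Haq] : 1 < a + p /\ 1 < a + q by lia.
have [HpE2 HqE2] : a + p + D <= E2 /\ a + q + D <= E2 by lia.
have [HS2p HS2q] : S2 < a + p /\ S2 < a + q by lia.
case: (ltnP E2 (size w')) => HE2w.
  case: Hright2 => [HE2e|/neq_negb Hmis]; first by rewrite HE2e ltnn in HE2w.
  case: (eqVneq (letter w' E2.+1) f) => Hg.
    left; apply: (lost_root_inner (lift p f R Hp _) Hap HE2w Hrun2 HpE2).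
    by right; rewrite Hmis Hg.
  right; exists q; split => //.
  apply: (lost_root_inner (lift q (~~ f) Rq _ _) Haq HE2w Hrun2 HqE2); first by lia.
  by right; rewrite Hmis (neq_negb Hg) negbK.
have HE2e : E2 = size w' by lia.
case: (eqVneq (fw w' (S2, E2)) f) => Hg.
  by left; apply: (lost_root_border (lift p f R Hp _) Hap HE2e Hrun2 HpE2 HS2p); left.
right; exists q; split => //.
apply: (lost_root_border (lift q (~~ f) Rq _ _) Haq HE2e Hrun2 HqE2 HS2q).
- by lia.
- by left.
- by left; rewrite (neq_negb Hg) negbK.
Qed.

End Concat.

Lemma lost_cat_image w1 w w2 p : lost w p -> exists v,
  [/\ 0 < v <= size w - 1, lost (w1 ++ w ++ w2) (size w1 + v), v <= p &
      v = p \/ lost_partner w p v].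
Proof.
move=> Hl; have /andP[Hp Hpw] := lost_range Hl.
have R := lost_lyndon_root Hl.
case: (ltnP (Ew w p) (size w)) => HE.
  by exists p; split => //; [lia | exact: lost_cat_inner | left].
have HEw : Ew w p = size w by case: R; lia.
have [Hrun HpD HSp Hlyf] := lost_border_data Hl HEw.
rewrite HEw in R.
case: (ltnP 1 (Dw w p)) => HD; last first.
  have HD1 : Dw w p = 1 by case: R; lia.
  rewrite HD1 in R Hrun HpD.
  by exists p; split => //; [lia | apply: (lost_cat_border_unary _ _ R); lia | left].
case: (lost_cat_border_root w1 w2 R Hp HD Hrun HpD Hlyf) => [Hl'|[q [Hq Hpq Rq Hl']]].
  by exists p; split => //; [lia | left].
exists q; split => //; try lia; right.
have HRq : Rw w q = Rw w p by rewrite /Rw (lyndon_root_Sw Rq) (lyndon_root_Ew Rq) HEw.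
split => //.
- by lia.
- exact: (lyndon_root_Dw Rq).
- move=> Hlq; have [_ _ _] := lost_border_data Hlq (lyndon_root_Ew Rq).
  rewrite (lyndon_root_Sw Rq) (lyndon_root_Dw Rq) => Hly.
  have := lyndon_orientation (root_lyndon Rq) Hly.
  by rewrite size_factor; [case: (fw _ _) => /(_ ltac:(lia)) | lia | case: Rq; lia].
- by rewrite /Rw HEw (lyndon_root_Lw R).
Qed.

Lemma exists_argmax N (P : nat -> Prop) (h : nat -> nat) :
  (exists p, P p) -> (forall p, P p -> p < N) ->
  exists2 p0, P p0 & forall p, P p -> h p <= h p0.
Proof.
elim: N P => [|N IH] P [p Pp] Hbound; first by have := Hbound p Pp.
have HPq q : P q -> q < N \/ q = N by move/Hbound; lia.
case: (classic (exists p, P p /\ p < N)) => [Hex|Hnex]; last first.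
  have HpN : p = N by case: (HPq p Pp) => // HpN; case: Hnex; exists p.
  exists p => // q Pq; case: (HPq q Pq) => [HqN|->]; last by rewrite HpN.
  by case: Hnex; exists q.
have [p1 [Pp1 _] Hmax] := IH (fun p => P p /\ p < N) Hex (fun p => @proj2 _ _).
have Hmax' q : P q -> q < N -> h q <= h p1 by move=> Pq HqN; apply: Hmax.
case: (classic (P N /\ h p1 < h N)) => [[PN Hlt]|Hnot].
  exists N => // q Pq; case: (HPq q Pq) => [HqN|-> //].
  exact: leq_trans (Hmax' q Pq HqN) (ltnW Hlt).
exists p1 => // q Pq; case: (HPq q Pq) => [HqN|HqN]; first exact: Hmax'.
by rewrite leqNgt; apply/negP => Hlt; apply: Hnot; rewrite -HqN.
Qed.

Lemma increasing_rearrangement N (P Q : nat -> Prop) (g : nat -> nat) :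
  (forall p, P p -> p < N) -> (forall p, P p -> g p <= p /\ Q (g p)) ->
  (forall p q, P p -> P q -> g p = g q -> p = q) ->
  exists mu : nat -> nat, [/\ forall p q, P p -> P q -> p < q -> mu p < mu q,
     forall p, P p -> mu p <= p /\ Q (mu p) &
     forall p, P p -> exists2 p', P p' & mu p = g p'].
Proof.
(* If P N, then N gets the largest value g p0 of g on P, and p0 inherits the value
   g N, which is at most g p0 <= p0. *)
elim: N P g => [|N IH] P g Hbound Hg Hinj.
  by exists g; split=> [p q /Hbound|p /Hg|p Pp]; last exists p.
case: (classic (P N)) => PN; last first.
  apply: IH Hg Hinj => p Pp; have := Hbound p Pp; rewrite ltnS leq_eqVlt.
  by case/predU1P => // HpN; rewrite HpN in Pp.
have [p0 Pp0 Hmax] := exists_argmax g (ex_intro _ N PN) Hbound.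
pose P' p := P p /\ p < N.
pose g' p := if p == p0 then g N else g p.
have Hg' p : P' p -> g' p <= p /\ Q (g' p).
  case=> Pp _; rewrite /g'; case: eqP => [->|_]; last exact: Hg.
  have [_ HQ] := Hg N PN; have [Hp0 _] := Hg p0 Pp0.
  by split => //; apply: leq_trans (Hmax N PN) Hp0.
have Hinj' p q : P' p -> P' q -> g' p = g' q -> p = q.
  case=> Pp Hp [Pq Hq]; rewrite /g'.
  case: eqP => Ep; case: eqP => Eq; [by rewrite Ep Eq | | | exact: Hinj].
  - by move/(Hinj _ _ PN Pq) => HNq; lia.
  - by move/(Hinj _ _ Pp PN) => HpN; lia.
have [mu' [Hmono' Hmu' Himg']] := IH P' g' (fun p => @proj2 _ _) Hg' Hinj'.
have Hbelow p : P' p -> mu' p < g p0.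
  move=> Pp; have [p' [Pp' Hp'N] ->] := Himg' p Pp; rewrite /g' ltn_neqAle.
  case: (p' =P p0) => [Ep'|Ep']; rewrite Hmax // andbT; apply/eqP.
  - by move/(Hinj _ _ PN Pp0) => HN; lia.
  - by move/(Hinj _ _ Pp' Pp0).
have HltN p : P p -> p != N -> p < N by move=> Pp; have := Hbound p Pp; lia.
exists (fun p => if p == N then g p0 else mu' p); split.
- move=> p q Pp Pq Hpq; have HpN : p < N by have := Hbound q Pq; lia.
  rewrite (ltn_eqF HpN); case: eqP => [_|/eqP HqN]; first exact: Hbelow.
  by apply: Hmono' => //; split => //; apply: HltN.
- move=> p Pp; case: eqP => [->|/eqP HpN]; last by apply: Hmu'; split => //; apply: HltN.
  have [Hp0 HQ] := Hg p0 Pp0; split => //.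
  by apply: leq_trans Hp0 _; have := Hbound p0 Pp0; lia.
- move=> p Pp; case: eqP => [_|/eqP HpN]; first by exists p0.
  have [p' [Pp' _] ->] := Himg' p (conj Pp (HltN p Pp HpN)).
  by rewrite /g'; case: eqP => _; [exists N | exists p'].
Qed.

Theorem lemma4 (w w1 w2 : word) :
  (forall p, lost w p -> 1 < p < size w) /\
  exists mu : nat -> nat,
    (forall p q, lost w p -> lost w q -> p < q -> mu p < mu q) /\
    (forall p, lost w p ->
       [/\ 1 <= mu p <= size w - 1,
           lost (w1 ++ w ++ w2) (size w1 + mu p) &
           mu p <= p]).
Proof.
split => [p|]; first exact: lost_range.
have Himage p : exists v, lost w p ->
    [/\ 0 < v <= size w - 1, lost (w1 ++ w ++ w2) (size w1 + v), v <= p &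
        v = p \/ lost_partner w p v].
  case: (classic (lost w p)) => [/(lost_cat_image w1 w2) [v Hv] | Hl]; first by exists v.
  by exists 0 => /Hl.
have [g Hg] := functional_choice _ Himage.
have Hinj p q : lost w p -> lost w q -> g p = g q -> p = q.
  move=> Hp Hq Hpq; have [_ _ _ Hp'] := Hg p Hp; have [_ _ _ Hq'] := Hg q Hq.
  by apply: (lost_partner_inj Hp Hq Hp'); rewrite Hpq.
have Hbound p : lost w p -> p < size w by move/lost_range; lia.
pose Q v := 0 < v <= size w - 1 /\ lost (w1 ++ w ++ w2) (size w1 + v).
have Himage_le p : lost w p -> g p <= p /\ Q (g p) by case/Hg.
have [mu [Hmono Hmu _]] := increasing_rearrangement (Q := Q) Hbound Himage_le Hinj.
by exists mu; split => // p Hp; have [H3 [H1 H2]] := Hmu p Hp.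
Qed.
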